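(* Let $\Gamma=(G,\sigma)$ be a signed graph with vertex set $V_G = V_1\sqcup V_2\sqcup V$, where $|V_1|=|V_2|=m\ge 1$ and $|V|=d$. Assume: (1) there is an integer $\ell$ such that $d^{\pm}_1(v)-d^{\pm}_2(v)=\ell$ for every $v\in V_1$ and $d^{\pm}_2(u)-d^{\pm}_1(u)=\ell$ for every $u\in V_2$; (2) every $v\in V$ satisfies one of: (a) $d^+_1(v)=m$ and $d^-_1(v)=d^+_2(v)=d^-_2(v)=0$, or the same with the roles of $V_1,V_2$ exchanged; (b) $d^-_1(v)=m$ and $d^+_1(v)=d^+_2(v)=d^-_2(v)=0$, or the same with the roles of $V_1,V_2$ exchanged; (c) $d^{\pm}_1(v)=d^{\pm}_2(v)$; (d) $d^+_1(v)=d^-_2(v)=m$, or the same with the roles of $V_1,V_2$ exchanged. Define $\Gamma'$ on the same vertex set by keeping all edges with both endpoints in $V_1\cup V_2$ or both in $V$, and, for each $v\in V$: in case (a), deleting the $m$ positive edges from $v$ to $V_1$ (resp. $V_2$) and joining $v$ by positive edges to all vertices of $V_2$ (resp. $V_1$); in case (b), deleting the $m$ negative edges from $v$ to $V_1$ (resp. $V_2$) and joining $v$ by negative edges to all vertices of $V_2$ (resp. $V_1$); in case (c), leaving the edges from $v$ unchanged; in case (d), reversing the sign of all $2m$ edges from $v$ to $V_1\cup V_2$ (so $v$ becomes joined negatively to the part it was joined to positively, and positively to the other). Then $\Gamma$ and $\Gamma'$ are cospectral.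
   Context: A signed graph $\Gamma=(G,\sigma)$ is a simple finite graph $G=(V_G,E_G)$ with a map $\sigma:E_G\to\{+1,-1\}$. Its adjacency matrix $A_\Gamma=(a_{uv})$ is the symmetric matrix with $a_{uv}=\sigma(uv)$ if $u,v$ are adjacent and $a_{uv}=0$ otherwise; two signed graphs are cospectral if their adjacency matrices have the same characteristic polynomial. For a vertex $v$ and $i\in\{1,2\}$, $d^+_i(v)$ (resp. $d^-_i(v)$) is the number of positive (resp. negative) edges joining $v$ to vertices of $V_i$, and $d^{\pm}_i(v)=d^+_i(v)-d^-_i(v)$. *)

From HB Require Import structures.
From mathcomp Require Import all_boot all_order all_algebra.
Set Implicit Arguments. Unset Strict Implicit. Unset Printing Implicit Defensive.
Import Order.TTheory GRing.Theory Num.Theory.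
Local Open Scope ring_scope.

(* A signed graph on vertex set 'I_n is given by its signature-weighted
   adjacency function s : s i j = sigma(ij) if ij is an edge, 0 otherwise. *)
Definition is_signed_graph (n : nat) (s : 'I_n -> 'I_n -> int) : Prop :=
  (forall i j, s i j = s j i) /\ (forall i, s i i = 0) /\
  (forall i j, s i j = 0 \/ s i j = 1 \/ s i j = -1).

Definition adj (n : nat) (s : 'I_n -> 'I_n -> int) : 'M[int]_n :=
  \matrix_(i, j) s i j.

Definition cospectral (n : nat) (s s' : 'I_n -> 'I_n -> int) : Prop :=
  char_poly (adj s) = char_poly (adj s').

Definition dplus (n : nat) (s : 'I_n -> 'I_n -> int) (A : {set 'I_n}) v : nat :=
  #|[set u in A | s v u == 1]|.
Definition dminus (n : nat) (s : 'I_n -> 'I_n -> int) (A : {set 'I_n}) v : nat :=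
  #|[set u in A | s v u == -1]|.
Definition dpm (n : nat) (s : 'I_n -> 'I_n -> int) (A : {set 'I_n}) v : int :=
  (dplus s A v)%:Z - (dminus s A v)%:Z.

Section Cases.
Variables (n m : nat) (s : 'I_n -> 'I_n -> int) (V1 V2 : {set 'I_n}).
Definition caseA1 v := [&& dplus s V1 v == m, dminus s V1 v == 0%N,
                           dplus s V2 v == 0%N & dminus s V2 v == 0%N].
Definition caseA2 v := [&& dplus s V2 v == m, dminus s V2 v == 0%N,
                           dplus s V1 v == 0%N & dminus s V1 v == 0%N].
Definition caseB1 v := [&& dminus s V1 v == m, dplus s V1 v == 0%N,
                           dplus s V2 v == 0%N & dminus s V2 v == 0%N].
Definition caseB2 v := [&& dminus s V2 v == m, dplus s V2 v == 0%N,
                           dplus s V1 v == 0%N & dminus s V1 v == 0%N].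
Definition caseC v := dpm s V1 v == dpm s V2 v.
Definition caseD1 v := (dplus s V1 v == m) && (dminus s V2 v == m).
Definition caseD2 v := (dplus s V2 v == m) && (dminus s V1 v == m).

Definition admissible v :=
  [|| caseA1 v, caseA2 v, caseB1 v, caseB2 v, caseC v, caseD1 v | caseD2 v].

(* new sign of the edge between v in V and u in V1 :|: V2 *)
Definition new_sign v u : int :=
  if caseA1 v then (if u \in V2 then 1 else 0)
  else if caseA2 v then (if u \in V1 then 1 else 0)
  else if caseB1 v then (if u \in V2 then -1 else 0)
  else if caseB2 v then (if u \in V1 then -1 else 0)
  else if caseD1 v || caseD2 v then - s v u
  else s v u.
End Cases.

Definition switched (n m : nat) (s : 'I_n -> 'I_n -> int)
    (V1 V2 V : {set 'I_n}) (i j : 'I_n) : int :=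
  if (i \in V) && (j \in V1 :|: V2) then new_sign m s V1 V2 i j
  else if (j \in V) && (i \in V1 :|: V2) then new_sign m s V1 V2 j i
  else s i j.

From HB Require Import structures.
From mathcomp Require Import all_boot all_order all_algebra.
From mathcomp Require Import ring.
Set Implicit Arguments. Unset Strict Implicit. Unset Printing Implicit Defensive.
Import Order.TTheory GRing.Theory Num.Theory.
Local Open Scope ring_scope.

(* Let w be the weight vector that is 1 on V1, -1 on V2 and 0 on V, so that
   w.w = 2m, and let Q = I - (1/m) w w^T.  This is a Householder-type
   reflection: Q^2 = I, hence Q A Q and A have the same characteristic
   polynomial.  We show that Q A Q is exactly the adjacency matrix of Gamma'.
   Writing b = A w, so that b(v) = d^{+-}_1(v) - d^{+-}_2(v), one has
     (Q A Q)_ij = A_ij - (1/m)(w_i b_j + b_i w_j) + (1/m^2)(w.b) w_i w_j.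
   - On V1 u V2, hypothesis (1) says b = l w, and the correction vanishes.
   - On V x V both weights vanish.
   - For v in V and u in V1 u V2 the entry is A_vu - b(v) w(u) / m; in case
     (c) b(v) = 0, while in cases (a), (b), (d) the edges from v are constant
     on V1 and on V2, and the formula exchanges the two constant values,
     which is precisely the prescribed new signature. *)

Section RankOneReflection.
Variables (R : comNzRingType) (n : nat) (w : 'I_n -> R) (c : R).

Definition rank_one : 'M[R]_n := \matrix_(i, j) (w i * w j).
Definition reflection : 'M[R]_n := 1%:M - c *: rank_one.

Lemma rank_one_sq : rank_one *m rank_one = (\sum_k w k * w k) *: rank_one.
Proof.
apply/matrixP => i j; rewrite !mxE mulr_suml; apply: eq_bigr => k _.
rewrite !mxE; ring.
Qed.

Lemma reflection_involutive :
  c * (\sum_k w k * w k) = 2 -> reflection *m reflection = 1%:M.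
Proof.
move=> cw2; rewrite /reflection mulmxBl mul1mx mulmxBr mulmx1 -!scalemxAl -scalemxAr.
rewrite rank_one_sq !scalerA -mulrA cw2.
apply/matrixP => i j; rewrite !mxE; ring.
Qed.

Lemma reflection_conj (A : 'M[R]_n) (a : 'I_n -> R) (i j : 'I_n) :
  (forall i j, A i j = A j i) -> (forall k, a k = \sum_l A k l * w l) ->
  (reflection *m A *m reflection) i j =
  A i j - c * (w i * a j + a i * w j) + c ^+ 2 * (\sum_k w k * a k) * (w i * w j).
Proof.
move=> Asym aE.
have PA : rank_one *m A = \matrix_(i, j) (w i * a j).
  apply/matrixP => k l; rewrite !mxE aE mulr_sumr; apply: eq_bigr => x _.
  by rewrite !mxE Asym; ring.
have AP : A *m rank_one = \matrix_(i, j) (a i * w j).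
  apply/matrixP => k l; rewrite !mxE aE mulr_suml; apply: eq_bigr => x _.
  by rewrite !mxE; ring.
have PAP : rank_one *m A *m rank_one = (\sum_k w k * a k) *: rank_one.
  apply/matrixP => k l; rewrite PA !mxE mulr_suml; apply: eq_bigr => x _.
  by rewrite !mxE; ring.
rewrite /reflection mulmxBl mul1mx !mulmxBr mulmx1 !mulmxBl.
rewrite -!scalemxAl -!scalemxAr scalerA PAP PA AP !mxE; ring.
Qed.

End RankOneReflection.

Lemma char_poly_conj (R : comNzRingType) n (Q A : 'M[R]_n) :
  Q *m Q = 1%:M -> char_poly (Q *m A *m Q) = char_poly A.
Proof.
move=> QQ; rewrite /char_poly /char_poly_mx.
set Qp := map_mx polyC Q.
have QpQp : Qp *m Qp = 1%:M by rewrite -map_mxM QQ map_scalar_mx.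
have -> : 'X%:M - map_mx polyC (Q *m A *m Q) = Qp *m ('X%:M - map_mx polyC A) *m Qp.
  by rewrite !map_mxM mulmxBr mulmxBl mul_mx_scalar -scalemxAl QpQp scalemx1.
by rewrite !det_mulmx mulrC mulrA -det_mulmx QpQp det1 mul1r.
Qed.

(* Cospectrality of integer matrices may be witnessed by a rational
   involution, since int -> rat is injective. *)
Lemma cospectral_of_conj n (s s' : 'I_n -> 'I_n -> int) (Q : 'M[rat]_n) :
  Q *m Q = 1%:M ->
  map_mx (intr : int -> rat) (adj s') = Q *m map_mx intr (adj s) *m Q ->
  cospectral s s'.
Proof.
move=> QQ E; apply: (@map_inj_poly _ _ (intr : int -> rat)).
- exact: intr_inj.
- by rewrite rmorph0.
by rewrite !map_char_poly E char_poly_conj.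
Qed.

Section SignedGraph.
Variables (n m : nat) (s : 'I_n -> 'I_n -> int) (V1 V2 : {set 'I_n}).
Hypotheses (sg : is_signed_graph s) (disV12 : [disjoint V1 & V2]).
Hypotheses (card1 : #|V1| = m) (card2 : #|V2| = m).

Definition side_weight (i : 'I_n) : rat :=
  if i \in V1 then 1 else if i \in V2 then -1 else 0.

Definition balance (v : 'I_n) : rat := \sum_k (s v k)%:~R * side_weight k.

Lemma sum_side_weight (f : 'I_n -> rat) :
  \sum_k f k * side_weight k = \sum_(k in V1) f k - \sum_(k in V2) f k.
Proof.
rewrite [\sum_(k in V1) _]big_mkcond [\sum_(k in V2) _]big_mkcond -sumrB.
apply: eq_bigr => k _; rewrite /side_weight.
case: (boolP (k \in V1)) => [k1|_]; first by rewrite (disjointFr disV12 k1) mulr1 subr0.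
by case: (k \in V2); rewrite ?mulrN1 ?sub0r ?mulr0 ?subr0.
Qed.

Lemma side_weight_sq_sum : \sum_k side_weight k * side_weight k = 2 * m%:R.
Proof.
have w1 : {in V1, forall k, side_weight k = 1} by move=> k k1; rewrite /side_weight k1.
have w2 : {in V2, forall k, side_weight k = -1}.
  by move=> k k2; rewrite /side_weight k2 (disjointFl disV12 k2).
rewrite sum_side_weight (eq_bigr _ w1) (eq_bigr _ w2) !sumr_const card1 card2 mulNrn opprK.
ring.
Qed.

Lemma dpm_sum (X : {set 'I_n}) v :
  ((dpm s X v)%:~R : rat) = \sum_(u in X) (s v u)%:~R.
Proof.
have [_ [_ sgn]] := sg.
have card_sum (P : pred 'I_n) :
    (#|[set u in X | P u]|%:R : rat) = \sum_(u in X) (P u)%:R.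
  rewrite -sum1_card natr_sum [LHS]big_mkcond [RHS]big_mkcond.
  by apply: eq_bigr => i _; rewrite inE; case: (i \in X); case: (P i).
rewrite /dpm /dplus /dminus intrB -!pmulrn !card_sum -sumrB.
by apply: eq_bigr => u _; case: (sgn v u) => [|[]] ->.
Qed.

Lemma balance_dpm v : balance v = (dpm s V1 v)%:~R - (dpm s V2 v)%:~R.
Proof. by rewrite /balance sum_side_weight !dpm_sum. Qed.

Lemma balance_uniform v (a b : int) :
  {in V1, forall u, s v u = a} -> {in V2, forall u, s v u = b} ->
  balance v = (a%:~R - b%:~R) * m%:R.
Proof.
move=> sv1 sv2; rewrite /balance sum_side_weight.
have e1 : {in V1, forall u, ((s v u)%:~R : rat) = a%:~R} by move=> u /sv1 ->.
have e2 : {in V2, forall u, ((s v u)%:~R : rat) = b%:~R} by move=> u /sv2 ->.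
rewrite (eq_bigr _ e1) (eq_bigr _ e2).
by rewrite !sumr_const card1 card2 mulr_natr mulrnBl.
Qed.

Lemma sign_of_full_degree (X : {set 'I_n}) v (e : int) :
  #|[set u in X | s v u == e]| = #|X| -> {in X, forall u, s v u = e}.
Proof.
move=> full u uX.
have E : [set u in X | s v u == e] = X.
  by apply/eqP; rewrite eqEcard full leqnn andbT; apply/subsetP => x; rewrite inE => /andP[].
by move: uX; rewrite -E inE => /andP[_ /eqP].
Qed.

Lemma sign_of_no_edges (X : {set 'I_n}) v :
  dplus s X v = 0%N -> dminus s X v = 0%N -> {in X, forall u, s v u = 0}.
Proof.
have [_ [_ sgn]] := sg.
have absent (e : int) u : #|[set u in X | s v u == e]| = 0%N -> u \in X -> s v u != e.
  by move=> /cards0_eq E uX; apply/negP => su; have := in_set0 u; rewrite -E inE uX su.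
move=> noplus nominus u uX.
have := absent _ _ noplus uX; have := absent _ _ nominus uX.
by case: (sgn v u) => [|[]] ->.
Qed.

Lemma in_second_part u : u \in V1 :|: V2 -> (u \in V2) = (u \notin V1).
Proof.
rewrite inE; case: (boolP (u \in V1)) => [u1 _|//].
exact: disjointFr disV12 u1.
Qed.

Lemma new_sign_cases v : admissible m s V1 V2 v ->
  (dpm s V1 v = dpm s V2 v /\ forall u, new_sign m s V1 V2 v u = s v u) \/
  exists a b : int, [/\ {in V1, forall u, s v u = a}, {in V2, forall u, s v u = b}
    & {in V1 :|: V2, forall u, new_sign m s V1 V2 v u = if u \in V1 then b else a}].
Proof.
rewrite /admissible /new_sign.
have plus X : dplus s X v = m -> #|X| = m -> {in X, forall u, s v u = 1}.
  by move=> dX cX; apply: sign_of_full_degree; rewrite -/(dplus s X v) dX cX.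
have minus X : dminus s X v = m -> #|X| = m -> {in X, forall u, s v u = -1}.
  by move=> dX cX; apply: sign_of_full_degree; rewrite -/(dminus s X v) dX cX.
case: (caseA1 m s V1 V2 v) / and4P => [[/eqP p1 /eqP q1 /eqP p2 /eqP q2] _ | _].
  right; exists 1, 0; split; [exact: plus | exact: sign_of_no_edges |].
  by move=> u /in_second_part ->; case: (u \in V1).
case: (caseA2 m s V1 V2 v) / and4P => [[/eqP p2 /eqP q2 /eqP p1 /eqP q1] _ | _].
  by right; exists 0, 1; split; [exact: sign_of_no_edges | exact: plus |].
case: (caseB1 m s V1 V2 v) / and4P => [[/eqP q1 /eqP p1 /eqP p2 /eqP q2] _ | _].
  right; exists (-1), 0; split; [exact: minus | exact: sign_of_no_edges |].
  by move=> u /in_second_part ->; case: (u \in V1).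
case: (caseB2 m s V1 V2 v) / and4P => [[/eqP q2 /eqP p2 /eqP p1 /eqP q1] _ | _].
  by right; exists 0, (-1); split; [exact: sign_of_no_edges | exact: minus |].
case: (caseD1 m s V1 V2 v) / andP => [[/eqP p1 /eqP q2] _ | _].
  have [sv1 sv2] := (plus _ p1 card1, minus _ q2 card2).
  right; exists 1, (-1); split => // u uU.
  by case: (boolP (u \in V1)) => [/sv1 -> //|]; rewrite -in_second_part // => /sv2 ->.
case: (caseD2 m s V1 V2 v) / andP => [[/eqP p2 /eqP q1] _ | _].
  have [sv1 sv2] := (minus _ q1 card1, plus _ p2 card2).
  right; exists (-1), 1; split => // u uU.
  by case: (boolP (u \in V1)) => [/sv1 -> //|]; rewrite -in_second_part // => /sv2 ->.
by rewrite /= orbF /caseC => /eqP dpm_eq; left.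
Qed.

Lemma new_sign_reflection v u : (0 < m)%N ->
  admissible m s V1 V2 v -> u \in V1 :|: V2 ->
  ((new_sign m s V1 V2 v u)%:~R : rat) =
  (s v u)%:~R - m%:R^-1 * balance v * side_weight u.
Proof.
move=> m_gt0 adm uU; have m_neq0 : (m%:R : rat) != 0 by rewrite pnatr_eq0 -lt0n.
case: (new_sign_cases adm) => [[dpm_eq ->] | [a [b [sv1 sv2 swapped]]]].
  by rewrite balance_dpm dpm_eq subrr mulr0 mul0r subr0.
rewrite swapped // (balance_uniform sv1 sv2) /side_weight.
case: (boolP (u \in V1)) => [u1 | u1]; first by rewrite sv1 //; field.
have u2 : u \in V2 by rewrite in_second_part.
by rewrite u2 sv2 //; field.
Qed.

Lemma balance_regular (l : int) :
  {in V1, forall v, dpm s V1 v - dpm s V2 v = l} ->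
  {in V2, forall u, dpm s V2 u - dpm s V1 u = l} ->
  {in V1 :|: V2, forall x, balance x = l%:~R * side_weight x}.
Proof.
move=> reg1 reg2 x xU; rewrite balance_dpm /side_weight -intrB.
case: (boolP (x \in V1)) => [/reg1 -> | x1]; first by rewrite mulr1.
have x2 : x \in V2 by rewrite (in_second_part xU).
by rewrite x2 -opprB reg2 // mulrN1 intrN.
Qed.

Section Switching.
Variables (V : {set 'I_n}) (l : int).
Hypotheses (m_gt0 : (0 < m)%N) (disV1 : [disjoint V1 & V]) (disV2 : [disjoint V2 & V]).
Hypothesis cover : V1 :|: V2 :|: V = [set: 'I_n].
Hypothesis bal_reg : {in V1 :|: V2, forall x, balance x = l%:~R * side_weight x}.
Hypothesis adm : {in V, forall v, admissible m s V1 V2 v}.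

Lemma switched_entry i j :
  ((switched m s V1 V2 V i j)%:~R : rat) =
  (s i j)%:~R - m%:R^-1 * (side_weight i * balance j + balance i * side_weight j)
  + m%:R^-1 ^+ 2 * (\sum_k side_weight k * balance k) * (side_weight i * side_weight j).
Proof.
have m_neq0 : (m%:R : rat) != 0 by rewrite pnatr_eq0 -lt0n.
have sym : forall i j, s i j = s j i by case: sg.
have wV x : x \in V -> side_weight x = 0.
  by move=> xV; rewrite /side_weight (disjointFl disV1 xV) (disjointFl disV2 xV).
have UV x : x \in V -> (x \in V1 :|: V2) = false.
  by move=> xV; rewrite inE (disjointFl disV1 xV) (disjointFl disV2 xV).
have VU x : x \notin V -> x \in V1 :|: V2.
  by move=> xV; move: (in_setT x); rewrite -cover inE (negbTE xV) orbF.
have wb : \sum_k side_weight k * balance k = l%:~R * (2 * m%:R).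
  rewrite -side_weight_sq_sum mulr_sumr; apply: eq_bigr => x _.
  case: (boolP (x \in V)) => [/wV -> | /VU/bal_reg ->]; first by rewrite !mul0r mulr0.
  by rewrite mulrCA.
rewrite /switched wb.
case: (boolP (i \in V)) => iV /=; case: (boolP (j \in V)) => jV /=.
- by rewrite (UV j jV) (UV i iV) (wV i iV) (wV j jV); ring.
- by rewrite (VU j jV) new_sign_reflection ?adm ?VU // (wV i iV); ring.
- by rewrite (VU i iV) new_sign_reflection ?adm ?VU // (wV j jV) sym; ring.
- by rewrite (bal_reg (VU i iV)) (bal_reg (VU j jV)); field.
Qed.

End Switching.
End SignedGraph.

Theorem theorem5p1 (n m d : nat) (s : 'I_n -> 'I_n -> int)
    (V1 V2 V : {set 'I_n}) :
  is_signed_graph s ->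
  [disjoint V1 & V2] -> [disjoint V1 & V] -> [disjoint V2 & V] ->
  V1 :|: V2 :|: V = [set: 'I_n] ->
  #|V1| = m -> #|V2| = m -> (1 <= m)%N -> #|V| = d ->
  (exists l : int,
     (forall v, v \in V1 -> dpm s V1 v - dpm s V2 v = l) /\
     (forall u, u \in V2 -> dpm s V2 u - dpm s V1 u = l)) ->
  (forall v, v \in V -> admissible m s V1 V2 v) ->
  cospectral s (switched m s V1 V2 V).
Proof.
move=> sg disV12 disV1 disV2 cover card1 card2 m_gt0 _ [l [reg1 reg2]] adm.
have m_neq0 : (m%:R : rat) != 0 by rewrite pnatr_eq0 -lt0n.
pose Q := reflection (side_weight V1 V2) m%:R^-1.
have Q_inv : Q *m Q = 1%:M.
  by apply: reflection_involutive; rewrite (side_weight_sq_sum disV12 card1 card2); field.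
apply: (cospectral_of_conj Q_inv); apply/matrixP => i j.
have [sym _] := sg.
rewrite (reflection_conj _ _ (a := balance s V1 V2)) => [|x y|x].
- have bal_reg := balance_regular sg disV12 reg1 reg2.
  by rewrite !mxE (switched_entry sg disV12 card1 card2 m_gt0 disV1 disV2 cover bal_reg adm).
- by rewrite !mxE sym.
- by rewrite /balance; apply: eq_bigr => y _; rewrite !mxE.
Qed.
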